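(* Consider a matched pair study and suppose the statistic $t(\cdot,\cdot)$ is effect increasing or differential increasing. If the bounded null $\overline H_0$ holds, then for every $\alpha\in(0,1)$ (with $\overline p_{\Gamma_0;k}$ computed from $q_{ij}=q_{ij}(Y)$ and $T=t(Z,Y)$): (i) for each $k$, $\{\Gamma_0\in[1,\infty]:\overline p_{\Gamma_0;k}>\alpha\}$ is a $1-\alpha$ confidence set for $\Gamma^\star_{(k)}$; (ii) for each $\Gamma_0$, $\{I-k:\overline p_{\Gamma_0;k}>\alpha,\ 0\le k\le I\}$ is a $1-\alpha$ confidence set for $I^\star(\Gamma_0)$; and (iii) these are simultaneously valid: $\mathbb P\big(\Gamma^\star\in\bigcap_{(\Gamma_0,k):\overline p_{\Gamma_0;k}\le\alpha}\mathcal S_{\Gamma_0;k}^c\big)\ge1-\alpha$.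
   Context: Setting: $I$ matched pairs; potential outcomes fixed; $Z\in\mathcal Z=\{z\in\{0,1\}^{2I}:z_{i1}+z_{i2}=1\ \forall i\}$ random with true mechanism $\mathbb P(Z=z)=\prod_i\prod_j(p^\star_{ij})^{z_{ij}}$; $\Gamma^\star_i=\max_jp^\star_{ij}/\min_kp^\star_{ik}\in[1,\infty]$, $\Gamma^\star_{(k)}$ its $k$th smallest, $I^\star(\Gamma_0)=\#\{i:\Gamma^\star_i>\Gamma_0\}$, $\mathcal S_{\Gamma_0;k}=\{\Gamma\in[1,\infty]^I:\Gamma_{(k)}\le\Gamma_0\}$ ($\Gamma_{(k)}$ = $k$th smallest coordinate), complement in $[1,\infty]^I$. $Y=Z\circ Y(1)+(1-Z)\circ Y(0)$. $\overline H_0$: $Y_{ij}(1)\le Y_{ij}(0)$ for all $i,j$. $t(z,y)=\sum_i\sum_jz_{ij}q_{ij}(y)$. Effect increasing: $t(z,y+z\circ\eta+(1-z)\circ\xi)\ge t(z,y)$ for $z\in\mathcal Z$, $\eta\succcurlyeq0\succcurlyeq\xi$. Differential increasing: $t(z,y+a\circ\eta)-t(z,y)\le t(a,y+a\circ\eta)-t(a,y)$ for $z,a\in\mathcal Z$, $\eta\succcurlyeq0$. With $q_{ij}=q_{ij}(Y)$, fix an ordering by nondecreasing $|q_{i1}-q_{i2}|$ and let $\mathcal I_k$ be the first $k$ pairs; $\overline T(\Gamma_0;k)$ is a sum of independent variables equal, for $i\in\mathcal I_k$, to $\max\{q_{i1},q_{i2}\}$ w.p. $\Gamma_0/(1+\Gamma_0)$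 and $\min\{q_{i1},q_{i2}\}$ otherwise, and for $i\notin\mathcal I_k$ to $\max\{q_{i1},q_{i2}\}$; $\overline p_{\Gamma_0;k}=\mathbb P(\overline T(\Gamma_0;k)\ge c)|_{c=T}$, and $\overline p_{\Gamma_0;0}=1$. *)

From HB Require Import structures.
From mathcomp Require Import all_boot all_order all_algebra.
From mathcomp Require Import boolp reals constructive_ereal.
Set Implicit Arguments. Unset Strict Implicit. Unset Printing Implicit Defensive.
Import Order.TTheory GRing.Theory Num.Theory.
Local Open Scope ring_scope.

(* Matched pairs: pair i : 'I_I, unit j : 'I_2 (j = 0 is "unit 1", j = 1 is "unit 2").
   An assignment z in the set  Z = {z in {0,1}^{2I} : z_i1 + z_i2 = 1}  is encoded
   bijectively by s : {ffun 'I_I -> 'I_2} (the treated unit of each pair);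
   its 0/1 vector is [zv s]. *)

Section Defs.
Variables (R : realType) (I : nat).
Local Notation vec := ('I_I -> 'I_2 -> R).

Definition zv (s : {ffun 'I_I -> 'I_2}) : vec := fun i j => (s i == j)%:R.

Definition Yobs (Y1 Y0 : vec) (s : {ffun 'I_I -> 'I_2}) : vec :=
  fun i j => zv s i j * Y1 i j + (1 - zv s i j) * Y0 i j.

Definition tstat (q : vec -> vec) (s : {ffun 'I_I -> 'I_2}) (y : vec) : R :=
  \sum_(i < I) \sum_(j < 2) zv s i j * q y i j.

Definition effect_increasing (q : vec -> vec) : Prop :=
  forall (s : {ffun 'I_I -> 'I_2}) (y eta xi : vec),
    (forall i j, 0 <= eta i j) -> (forall i j, xi i j <= 0) ->
    tstat q s y <=
    tstat q s (fun i j => y i j + zv s i j * eta i j + (1 - zv s i j) * xi i j).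

Definition differential_increasing (q : vec -> vec) : Prop :=
  forall (s a : {ffun 'I_I -> 'I_2}) (y eta : vec),
    (forall i j, 0 <= eta i j) ->
    let y' := fun i j => y i j + zv a i j * eta i j in
    tstat q s y' - tstat q s y <= tstat q a y' - tstat q a y.

Definition bounded_null (Y1 Y0 : vec) : Prop := forall i j, Y1 i j <= Y0 i j.

(* probability of an event under the true mechanism
   P(Z = z) = prod_i prod_j (p*_ij)^{z_ij} = prod_i p*_{i, s i} *)
Definition Prob (pstar : vec) (E : {ffun 'I_I -> 'I_2} -> Prop) : R :=
  \sum_(s : {ffun 'I_I -> 'I_2} | `[< E s >]) \prod_(i < I) pstar i (s i).

Definition Gstar (pstar : vec) (i : 'I_I) : \bar R :=
  let pmax := Num.max (pstar i ord0) (pstar i ord_max) in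
  let pmin := Num.min (pstar i ord0) (pstar i ord_max) in
  if pmin == 0 then +oo%E else (pmax / pmin)%:E.

Definition kth_smallest (G : 'I_I -> \bar R) (k : nat) : \bar R :=
  nth +oo%E (sort (fun x y : \bar R => (x <= y)%O) [seq G i | i <- enum 'I_I]) k.-1.

Definition Istar (pstar : vec) (G0 : \bar R) : nat :=
  #|[set i : 'I_I | (G0 < Gstar pstar i)%E]|.

Definition inS (G : 'I_I -> \bar R) (G0 : \bar R) (k : nat) : Prop :=
  (kth_smallest G k <= G0)%E.

Definition theta (G0 : \bar R) : R :=
  match G0 with
  | EFin g => g / (1 + g)
  | +oo%E => 1
  | -oo%E => 0
  end.

(* I_k : the first k pairs in an ordering by nondecreasing |q_i1 - q_i2|
   (ties broken by the pair index; the law of Tbar does not depend on it) *)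
Definition Ik (qq : vec) (k : nat) : seq 'I_I :=
  take k (sort (fun i i' : 'I_I => `|qq i ord0 - qq i ord_max| <= `|qq i' ord0 - qq i' ord_max|)
               (enum 'I_I)).

(* pbar_{Gamma0;k} = P(Tbar(Gamma0;k) >= c)|_{c = T}, with q_ij = q_ij(Y), T = t(Z,Y),
   evaluated at the assignment s.  Tbar is the sum of independent variables
   X_i in {min_i, max_i}; b i = true means X_i = max_i. *)
Definition pbar (q : vec -> vec) (Y1 Y0 : vec) (s : {ffun 'I_I -> 'I_2})
    (G0 : \bar R) (k : nat) : R :=
  if k == 0%N then 1 else
  let y := Yobs Y1 Y0 s in
  let qq := q y in
  let T := tstat q s y in
  let S := Ik qq k in
  let th := theta G0 in
  let pi := fun (i : 'I_I) (b : bool) =>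
     if i \in S then (if b then th else 1 - th) else (if b then 1 else 0) in
  let val := fun (i : 'I_I) (b : bool) =>
     if b then Num.max (qq i ord0) (qq i ord_max) else Num.min (qq i ord0) (qq i ord_max) in
  \sum_(b : {ffun 'I_I -> bool})
     (\prod_(i < I) pi i (b i)) * (if T <= \sum_(i < I) val i (b i) then 1 else 0).

End Defs.

(* Under the bounded null the observed statistic is dominated by a fixed ranking of
   the assignments ([t(u, Y(u))] for an effect increasing statistic, [t(u, Y(0))] for
   a differential increasing one), so the exact upper tail [P(t(U, Y) >= T)] is a
   super-uniform p-value.  That tail is the tail of a sum of independent two-point
   variables, which only grows when the chance of the larger [q]-value is raised to
   [Gamma0 / (1 + Gamma0)] on the pairs with [Gamma*_i <= Gamma0] and to [1] on the
   others (a coupling, one pair at a time), and grows again when the raised pairs are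
   exchanged for those of least spread [|q_i1 - q_i2|]: it is therefore at most
   [pbar_{Gamma0;k}] whenever at least [k] pairs have [Gamma*_i <= Gamma0], which holds
   when [Gamma*_(k) <= Gamma0].  One event of probability [>= 1 - alpha] thus serves
   all three statements at once. *)

From HB Require Import structures.
From mathcomp Require Import all_boot all_order all_algebra.
From mathcomp Require Import boolp reals constructive_ereal.
From mathcomp Require Import perm ring lra.
Import Order.TTheory GRing.Theory Num.Theory.
Set Implicit Arguments. Unset Strict Implicit. Unset Printing Implicit Defensive.
Local Open Scope ring_scope.

Section TailProbability.
Variables (R : realType) (T : finType) (w : T -> R).
Hypothesis w_ge0 : forall s, 0 <= w s.

Lemma ler_sum_subpred (P Q : pred T) :
  (forall s, P s -> Q s) -> \sum_(s | P s) w s <= \sum_(s | Q s) w s.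
Proof.
move=> PQ; rewrite [leRHS]big_mkcond [leLHS]big_mkcond /=.
apply: ler_sum => s _; case: ifP => [/PQ -> //|_]; by case: ifP.
Qed.

Definition tailp (Tf : T -> R) (s : T) : R := \sum_(u | Tf s <= Tf u) w u.

(* The events [tailp Tf s <= a] are nested along the order of [Tf], so they all
   lie inside the largest one, attained at the minimiser of [Tf] over them. *)
Lemma tailp_superuniform (Tf : T -> R) (a : R) :
  0 <= a -> \sum_(s | tailp Tf s <= a) w s <= a.
Proof.
move=> a_ge0; have [s0 Hs0|none] := pickP (fun s => tailp Tf s <= a); last first.
  by rewrite big_pred0.
have [m Pm Hm] := @arg_minP _ _ _ s0 (fun s => tailp Tf s <= a) Tf Hs0.
by apply: le_trans Pm; apply: ler_sum_subpred => s /Hm.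
Qed.

End TailProbability.

Section BernoulliProducts.
Variables (R : realType) (I : nat).
Local Notation bvec := {ffun 'I_I -> bool}.
Implicit Types (b : bvec) (g : bvec -> R).

Definition flip (i0 : 'I_I) b : bvec :=
  [ffun i => if i == i0 then ~~ b i else b i].

Lemma flipK i0 : involutive (flip i0).
Proof. by move=> b; apply/ffunP => i; rewrite !ffunE; case: eqP; rewrite ?negbK. Qed.

Lemma flip_eq i0 b i : i != i0 -> flip i0 b i = b i.
Proof. by rewrite ffunE => /negbTE ->. Qed.

Lemma flip_id i0 b : flip i0 b i0 = ~~ b i0.
Proof. by rewrite ffunE eqxx. Qed.

Lemma sum_flip_pairs i0 (F : bvec -> R) :
  \sum_(b : bvec) F b = \sum_(b : bvec | ~~ b i0) (F b + F (flip i0 b)).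
Proof.
rewrite (bigID (fun b : bvec => ~~ b i0)) /= big_split /=; congr (_ + _).
rewrite (reindex (flip i0)); last by apply: onW_bij; apply: inv_bij; apply: flipK.
by apply: eq_bigl => b; rewrite flip_id negbK.
Qed.

Definition flip_monotone g := forall b i0, ~~ b i0 -> g b <= g (flip i0 b).

Definition Eprod (p : 'I_I -> bool -> R) g : R :=
  \sum_(b : bvec) (\prod_i p i (b i)) * g b.

Lemma eq_Eprod (p p' : 'I_I -> bool -> R) g :
  (forall i x, p i x = p' i x) -> Eprod p g = Eprod p' g.
Proof. by move=> e; apply: eq_bigr => b _; under eq_bigr do rewrite e. Qed.

(* Pairing [b] with [flip i0 b], the change of weights only moves mass from [b]
   to [flip i0 b], where [g] is larger. *)
Lemma Eprod_le_coord i0 (p p' : 'I_I -> bool -> R) g :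
  (forall i x, 0 <= p i x) -> (forall i, i != i0 -> p i =1 p' i) ->
  p i0 true + p i0 false = p' i0 true + p' i0 false ->
  p i0 true <= p' i0 true -> flip_monotone g ->
  Eprod p g <= Eprod p' g.
Proof.
move=> p0 pp' psum pt gm; rewrite /Eprod (sum_flip_pairs i0) [leRHS](sum_flip_pairs i0).
apply: ler_sum => b nb.
set C := \prod_(i | i != i0) p i (b i).
have prodE q : (forall i, i != i0 -> q i =1 p i) -> forall b',
    (forall i, i != i0 -> b' i = b i) -> \prod_i q i (b' i) = q i0 (b' i0) * C.
  move=> qp b' bb'; rewrite (bigD1 i0) //=; congr (_ * _).
  by apply: eq_bigr => i ni; rewrite qp // bb'.
have p'p i : i != i0 -> p' i =1 p i by move=> ni x; rewrite pp'.
rewrite !prodE //; try by move=> i /flip_eq.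
rewrite flip_id (negbTE nb).
have C0 : 0 <= C by apply: prodr_ge0.
have := gm b i0 nb; set gb := g b; set gf := g (flip i0 b) => gbf.
have e : p' i0 false = p i0 true + p i0 false - p' i0 true by rewrite psum; ring.
rewrite e -subr_ge0.
have -> : (p i0 true + p i0 false - p' i0 true) * C * gb + p' i0 true * C * gf -
   (p i0 false * C * gb + p i0 true * C * gf) = C * ((p' i0 true - p i0 true) * (gf - gb)) by ring.
by apply: mulr_ge0 => //; apply: mulr_ge0; rewrite subr_ge0.
Qed.

Lemma Eprod_le (p p' : 'I_I -> bool -> R) g :
  (forall i x, 0 <= p i x) -> (forall i x, 0 <= p' i x) ->
  (forall i, p i true + p i false = p' i true + p' i false) ->
  (forall i, p i true <= p' i true) -> flip_monotone g ->
  Eprod p g <= Eprod p' g.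
Proof.
move=> p0 p'0 psum pt gm.
pose mix n (i : 'I_I) := if (i < n)%N then p' i else p i.
suff H n : Eprod p g <= Eprod (mix n) g.
  by apply: le_trans (H I) _; rewrite (@eq_Eprod (mix I) p') // => i x; rewrite /mix ltn_ord.
elim: n => [|n IH]; first by rewrite (@eq_Eprod p (mix 0%N)).
apply: le_trans IH _; have [nI|In] := ltnP n I; last first.
  rewrite (@eq_Eprod (mix n) (mix n.+1)) // => i x.
  by rewrite /mix (leq_trans (ltn_ord i) In) (leq_trans (ltn_ord i) (leqW In)).
have mixn : mix n (Ordinal nI) = p (Ordinal nI) by rewrite /mix /= ltnn.
have mixSn : mix n.+1 (Ordinal nI) = p' (Ordinal nI) by rewrite /mix /= ltnSn.
apply: (@Eprod_le_coord (Ordinal nI)); rewrite ?mixn ?mixSn //.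
- by move=> i x; rewrite /mix; case: ifP.
- move=> i ni x; rewrite /mix ltnS; case: ltngtP => // ein.
  by case/eqP: ni; apply: val_inj.
Qed.

End BernoulliProducts.

Section Rearrangement.
Variables (R : realType) (I : nat).
Local Notation bvec := {ffun 'I_I -> bool}.
Variables (th c : R) (M m : 'I_I -> R).
Hypotheses (th_ge0 : 0 <= th) (th_le1 : th <= 1) (mM : forall i, m i <= M i).
Implicit Types (S K : {set 'I_I}) (b : bvec).

Definition biasw (S : {set 'I_I}) (i : 'I_I) (x : bool) : R :=
  if i \in S then (if x then th else 1 - th) else (if x then 1 else 0).

Lemma biasw_ge0 S i x : 0 <= biasw S i x.
Proof. by rewrite /biasw; case: (i \in S); case: x; rewrite ?subr_ge0. Qed.

Lemma biasw_sum S i : biasw S i true + biasw S i false = 1.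
Proof. by rewrite /biasw; case: (i \in S); rewrite ?subrKC ?addr0. Qed.

Definition pick_sum b : R := \sum_i (if b i then M i else m i).

Definition tail_ind b : R := if c <= pick_sum b then 1 else 0.

Lemma tail_ind_mono b b' : pick_sum b <= pick_sum b' -> tail_ind b <= tail_ind b'.
Proof.
rewrite /tail_ind => le_bb'; case: ifP => [c_le|_]; last by case: ifP.
by rewrite (le_trans c_le le_bb').
Qed.

Lemma tail_ind_flip_monotone : flip_monotone tail_ind.
Proof.
move=> b i0 nb; apply/tail_ind_mono/ler_sum => i _.
have [->|ni] := eqVneq i i0; last by rewrite flip_eq.
by rewrite flip_id (negbTE nb).
Qed.

Lemma Eprod_biasw_sub S K : K \subset S ->
  Eprod (biasw S) tail_ind <= Eprod (biasw K) tail_ind.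
Proof.
move=> /subsetP KS; apply: Eprod_le.
- exact: biasw_ge0.
- exact: biasw_ge0.
- by move=> i; rewrite !biasw_sum.
- move=> i; rewrite /biasw; case iK: (i \in K); first by rewrite KS.
  by case: (i \in S).
- exact: tail_ind_flip_monotone.
Qed.

(* Exchanging the coordinates [i] and [j] is a measure-preserving bijection which,
   on outcomes where [j] takes [true], can only raise [pick_sum]. *)
Lemma Eprod_biasw_swap S i j : i \notin S -> j \in S -> M i - m i <= M j - m j ->
  Eprod (biasw S) tail_ind <= Eprod (biasw (i |: (S :\ j))) tail_ind.
Proof.
move=> iS jS dij; have ij : i != j by apply: contra iS => /eqP ->.
pose h (b : bvec) := [ffun l => b (tperm i j l)].
have hK : involutive h by move=> b; apply/ffunP => l; rewrite !ffunE tpermK.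
rewrite /Eprod (reindex h); last by apply: onW_bij; apply: inv_bij.
apply: ler_sum => b _.
have -> : \prod_l biasw S l (h b l) = \prod_l biasw (i |: (S :\ j)) l (b l).
  rewrite (reindex_inj (@perm_inj _ (tperm i j))) /=; apply: eq_bigr => l _.
  rewrite /h ffunE tpermK /biasw !inE.
  case: (tpermP i j l) => [->|->|/eqP li /eqP lj].
  - by rewrite eqxx jS.
  - by rewrite (negbTE iS) eq_sym (negbTE ij) eqxx.
  - by rewrite (negbTE li) (negbTE lj).
case bj : (b j); last first.
  by rewrite (bigD1 j) //= bj /biasw !inE eqxx /= eq_sym (negbTE ij) !mul0r.
apply: ler_wpM2l; first by apply: prodr_ge0 => l _; apply: biasw_ge0.
apply: tail_ind_mono; rewrite /pick_sum.
rewrite [in leLHS](bigD1 i) // [in leRHS](bigD1 i) //.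
rewrite [in leLHS](bigD1 j) 1?eq_sym // [in leRHS](bigD1 j) 1?eq_sym //=.
rewrite !ffunE tpermL tpermR bj.
under eq_bigr => l /andP[li lj] do rewrite ffunE tpermD 1?eq_sym //.
by rewrite !addrA lerD2r; case: (b i) => //; lra.
Qed.

Lemma exists_swap S K : ~~ (K \subset S) -> (#|K| <= #|S|)%N ->
  exists i j, [/\ i \in K, i \notin S, j \in S & j \notin K].
Proof.
move=> /subsetPn [i iK iS] KS; suff /subsetPn [j jS jK] : ~~ (S \subset K).
  by exists i, j.
apply/negP => SK; move: (eqEcard S K); rewrite SK KS => /eqP eSK.
by move: iS; rewrite eSK iK.
Qed.

(* Induction on [#|S :\: K|], each step being an exchange as above. *)
Lemma Eprod_biasw_least_spread S K : (#|K| <= #|S|)%N ->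
  (forall i j, i \in K -> j \notin K -> M i - m i <= M j - m j) ->
  Eprod (biasw S) tail_ind <= Eprod (biasw K) tail_ind.
Proof.
move=> KS dK; have [n] := ubnP #|S :\: K|; elim: n S KS => // n IH S KS lt_n.
have [|/exists_swap/(_ KS) [i [j [iK iS jS jK]]]] := boolP (K \subset S).
  exact: Eprod_biasw_sub.
apply: le_trans (Eprod_biasw_swap iS jS (dK _ _ iK jK)) (IH _ _ _).
  by rewrite cardsU1 !inE (negbTE iS) andbF /= (cardsD1 j S) jS in KS *.
rewrite -ltnS (leq_trans _ lt_n) // ltnS proper_card //; apply/properP; split.
  apply/subsetP => x; rewrite !inE => /andP[xK /orP[/eqP xi|/andP[_ ->]]].
    by rewrite xi iK in xK.
  by rewrite xK.
by exists j; rewrite !inE ?jK ?jS // eqxx andFb orbF; apply: contraNN iS => /eqP <-.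
Qed.

End Rearrangement.

Lemma card_set_count (T : finType) (P : pred T) : #|[set i | P i]| = count P (enum T).
Proof. by rewrite cardsE cardE /enum_mem size_filter (eq_filter (a2 := predT)) ?filter_predT. Qed.

Section OrderStatistics.
Variables (R : realType) (I : nat) (G : 'I_I -> \bar R) (k : nat).
Hypothesis k_range : (0 < k <= I)%N.

Let s := sort (fun x y : \bar R => (x <= y)%O) [seq G i | i <- enum 'I_I].

Let size_s : size s = I.
Proof. by rewrite size_sort size_map size_enum_ord. Qed.

Lemma kth_smallest_mem : exists i, kth_smallest G k = G i.
Proof.
case/andP: k_range => k_gt0 kI; rewrite /kth_smallest -/s.
have : nth +oo%E s k.-1 \in s by rewrite mem_nth // size_s (leq_trans _ kI) // prednK.
by rewrite mem_sort => /mapP [i _ ->]; exists i.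
Qed.

Lemma kth_smallest_le_card (G0 : \bar R) : (kth_smallest G k <= G0)%E ->
  (k <= #|[set i | (G i <= G0)%E]|)%N.
Proof.
case/andP: k_range => k_gt0 kI; rewrite /kth_smallest -/s card_set_count => hk.
have sorted_s : sorted <=%O s by apply: sort_sorted; exact: le_total.
have -> : count (fun i => (G i <= G0)%E) (enum 'I_I) = count (fun x => (x <= G0)%E) s.
  rewrite -(count_map G (fun x => (x <= G0)%E)).
  by apply/esym/seq.permP; rewrite perm_sort.
have size_take_s : size (take k s) = k by rewrite size_take size_s; case: ltngtP kI.
suff : all (fun x => (x <= G0)%E) (take k s).
  rewrite all_count size_take_s => /eqP <-.
  by rewrite -[X in (_ <= count _ X)%N](cat_take_drop k s) count_cat leq_addr.
apply/(all_nthP +oo%E) => a; rewrite size_take_s => ak.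
rewrite nth_take //; apply: le_trans hk.
apply: le_sorted_leq_nth => //; rewrite ?inE /= ?size_s.
- exact: leq_trans ak kI.
- by rewrite prednK // (leq_trans _ kI) // leq_pred.
- by rewrite -ltnS prednK.
Qed.

End OrderStatistics.

Lemma ord2_cases (j : 'I_2) : j = ord0 \/ j = ord_max.
Proof. by case: j => [[|[|n]] h] //=; [left|right]; apply: val_inj. Qed.

Lemma theta_in01 (R : realType) (G0 : \bar R) : (1 <= G0)%E -> 0 <= theta G0 <= 1.
Proof.
case: G0 => [g| |] //=; rewrite ?lee_fin => g1; last by rewrite ler01 lexx.
by rewrite divr_ge0 ?ler_pdivrMr /=; lra.
Qed.

Section PairProbabilities.
Variables (R : realType) (I : nat) (pstar : 'I_I -> 'I_2 -> R) (i : 'I_I).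
Hypotheses (pstar_ge0 : forall j, 0 <= pstar i j)
  (pstar_sum : pstar i ord0 + pstar i ord_max = 1).

Let pmax := Num.max (pstar i ord0) (pstar i ord_max).
Let pmin := Num.min (pstar i ord0) (pstar i ord_max).

Let pmin_ge0 : 0 <= pmin.
Proof. by rewrite le_min !pstar_ge0. Qed.

Let pmin_le_pmax : pmin <= pmax.
Proof. by rewrite ge_min le_max lexx. Qed.

Let pmax_pmin : pmax + pmin = 1.
Proof. by rewrite addr_max_min. Qed.

Lemma Gstar_ge1 : (1 <= Gstar pstar i)%E.
Proof.
rewrite /Gstar -/pmax -/pmin; case: eqP => [_|/eqP pmin_neq0]; first exact: leey.
have pmin_gt0 : 0 < pmin by rewrite lt_def pmin_neq0 pmin_ge0.
by rewrite lee_fin ler_pdivlMr // mul1r pmin_le_pmax.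
Qed.

(* [pmax / pmin <= g] with [pmax + pmin = 1] rearranges to [pmax <= g / (1 + g)]. *)
Lemma pstar_le_theta j (G0 : \bar R) : (Gstar pstar i <= G0)%E -> pstar i j <= theta G0.
Proof.
have pj : pstar i j <= pmax by case: (ord2_cases j) => ->; rewrite le_max lexx ?orbT.
rewrite /Gstar -/pmax -/pmin => hG; apply: le_trans pj _; move: hG.
case: G0 => [g| |] /=; [|by rewrite -pmax_pmin lerDl|by case: eqP].
case: eqP => // /eqP pmin_neq0; rewrite lee_fin => hg.
have pmin_gt0 : 0 < pmin by rewrite lt_def pmin_neq0 pmin_ge0.
move: hg; rewrite ler_pdivrMr // => hg.
have g_ge0 : 0 <= g by rewrite -(pmulr_lge0 _ pmin_gt0) (le_trans _ hg) // (le_trans pmin_ge0).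
have e : pmin = 1 - pmax by rewrite -pmax_pmin addrC addKr.
rewrite e in hg; rewrite ler_pdivlMr; [nra|lra].
Qed.

End PairProbabilities.

Section LeastSpreadPairs.
Variables (R : realType) (I : nat) (qq : 'I_I -> 'I_2 -> R) (k : nat).
Hypothesis kI : (k <= I)%N.

Let spread_le (i i' : 'I_I) := `|qq i ord0 - qq i ord_max| <= `|qq i' ord0 - qq i' ord_max|.
Let s := sort spread_le (enum 'I_I).

Let size_s : size s = I.
Proof. by rewrite size_sort size_enum_ord. Qed.

Let size_take_s : size (take k s) = k.
Proof. by rewrite size_take size_s; case: ltngtP kI. Qed.

Lemma card_Ik : #|[set i | i \in Ik qq k]| = k.
Proof.
rewrite -[RHS]size_take_s.
have /card_uniqP <- : uniq (take k s) by rewrite take_uniq // sort_uniq enum_uniq.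
by rewrite cardsE.
Qed.

Lemma Ik_least_spread i j : i \in Ik qq k -> j \notin Ik qq k ->
  `|qq i ord0 - qq i ord_max| <= `|qq j ord0 - qq j ord_max|.
Proof.
rewrite /Ik -/spread_le -/s => iT jT.
have sorted_s : sorted spread_le s by apply: sort_sorted => x y; exact: le_total.
have js : j \in s by rewrite mem_sort mem_enum.
have jD : j \in drop k s by move: js; rewrite -{1}(cat_take_drop k s) mem_cat (negbTE jT).
have ia : (index i (take k s) < k)%N by rewrite -{2}size_take_s index_mem.
have -> : i = nth i s (index i (take k s)) by rewrite -(nth_take _ ia) nth_index.
have -> : j = nth i s (k + index j (drop k s)) by rewrite -nth_drop nth_index.
have tr : transitive spread_le by move=> x y z; exact: le_trans.
apply: (sorted_leq_nth tr _ i sorted_s).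
- by move=> x; exact: lexx.
- by rewrite inE size_s (leq_trans ia kI).
- by rewrite inE -[X in (_ < size X)%N](cat_take_drop k s) size_cat size_take_s ltn_add2l index_mem.
- exact: leq_trans (ltnW ia) (leq_addr _ _).
Qed.

End LeastSpreadPairs.

Section Statistic.
Variables (R : realType) (I : nat) (q : ('I_I -> 'I_2 -> R) -> 'I_I -> 'I_2 -> R).
Local Notation vec := ('I_I -> 'I_2 -> R).
Local Notation assignment := {ffun 'I_I -> 'I_2}.

Lemma tstatE (s : assignment) (y : vec) : tstat q s y = \sum_i q y i (s i).
Proof.
apply: eq_bigr => i _; rewrite (bigD1 (s i)) //= /zv eqxx mul1r big1 ?addr0 // => j.
by rewrite eq_sym => /negbTE ->; rewrite mul0r.
Qed.

Variables (Y1 Y0 : vec).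
Hypothesis null : bounded_null Y1 Y0.

(* [Yobs s] is [Yobs u] raised on the units treated under [u] and lowered on the others. *)
Lemma effect_increasing_rank : effect_increasing q -> forall s u : assignment,
  tstat q u (Yobs Y1 Y0 u) <= tstat q u (Yobs Y1 Y0 s).
Proof.
move=> q_eff s u.
have -> : Yobs Y1 Y0 s = fun i j => Yobs Y1 Y0 u i j
    + zv R u i j * ((1 - zv R s i j) * (Y0 i j - Y1 i j))
    + (1 - zv R u i j) * (zv R s i j * (Y1 i j - Y0 i j)).
  apply: funext => i; apply: funext => j; rewrite /Yobs /zv.
  by case: (s i == j); case: (u i == j) => /=; lra.
by apply: q_eff => i j; rewrite /zv; have := null i j; case: (s i == j) => /=; lra.
Qed.

(* Adding the effect [Y0 - Y1] on the units treated under [s] turns [Yobs s] into [Y0]. *)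
Lemma differential_increasing_rank : differential_increasing q -> forall s u : assignment,
  tstat q s (Yobs Y1 Y0 s) - tstat q u (Yobs Y1 Y0 s) <= tstat q s Y0 - tstat q u Y0.
Proof.
move=> q_diff s u; have eff_ge0 i j : 0 <= Y0 i j - Y1 i j by rewrite subr_ge0.
have := q_diff u s (Yobs Y1 Y0 s) _ eff_ge0.
rewrite /= (_ : (fun i j => _) = Y0); last first.
  apply: funext => i; apply: funext => j; rewrite /Yobs /zv.
  by case: (s i == j) => /=; lra.
lra.
Qed.

Lemma exists_dominating_rank : effect_increasing q \/ differential_increasing q ->
  exists Tf : assignment -> R, forall s u, Tf s <= Tf u ->
    tstat q s (Yobs Y1 Y0 s) <= tstat q u (Yobs Y1 Y0 s).
Proof.
case=> [q_eff|q_diff].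
  exists (fun u => tstat q u (Yobs Y1 Y0 u)) => s u le_su.
  exact: le_trans le_su (effect_increasing_rank q_eff s u).
exists (tstat q ^~ Y0) => s u le_su.
by have := differential_increasing_rank q_diff s u; lra.
Qed.

End Statistic.

Section TailAsBernoulliSum.
Variables (R : realType) (I : nat) (pstar qq : 'I_I -> 'I_2 -> R).
Local Notation bvec := {ffun 'I_I -> bool}.

Definition jmax (i : 'I_I) : 'I_2 := if qq i ord0 <= qq i ord_max then ord_max else ord0.
Definition jmin (i : 'I_I) : 'I_2 := if qq i ord0 <= qq i ord_max then ord0 else ord_max.
Definition qmax (i : 'I_I) : R := Num.max (qq i ord0) (qq i ord_max).
Definition qmin (i : 'I_I) : R := Num.min (qq i ord0) (qq i ord_max).

Lemma qmin_le_qmax i : qmin i <= qmax i.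
Proof. by rewrite ge_min le_max lexx. Qed.

Lemma qmax_sub_qmin i : qmax i - qmin i = `|qq i ord0 - qq i ord_max|.
Proof.
rewrite /qmin /qmax minEle maxEle; case: ifP => h; first by rewrite distrC ger0_norm ?subr_ge0.
by rewrite ger0_norm // subr_ge0; move/negbT: h; rewrite -ltNge => /ltW.
Qed.

(* Recording which unit of each pair is treated by whether it is the one with the
   larger [qq] turns [sum_i qq i (u i)] into a sum of two-point variables. *)
Lemma tail_sum_Eprod (c : R) :
  \sum_(u : {ffun 'I_I -> 'I_2} | c <= \sum_i qq i (u i)) \prod_i pstar i (u i) =
  Eprod (fun i x => pstar i (if x then jmax i else jmin i)) (tail_ind c qmax qmin).
Proof.
pose dec (b : bvec) := [ffun i => if b i then jmax i else jmin i].
pose enc (u : {ffun 'I_I -> 'I_2}) := [ffun i => u i == jmax i].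
have jmin_neq i : (jmin i == jmax i) = false by rewrite /jmin /jmax; case: ifP.
have encK : cancel enc dec.
  move=> u; apply/ffunP => i; rewrite !ffunE; case: eqP => // /eqP.
  by rewrite /jmin /jmax; case: ifP => _; case: (ord2_cases (u i)) => ->.
have decK : cancel dec enc.
  by move=> b; apply/ffunP => i; rewrite !ffunE; case: (b i); rewrite ?eqxx ?jmin_neq.
rewrite big_mkcond /= (reindex dec); last by apply: onW_bij; exists enc.
apply: eq_bigr => b _.
have -> : \sum_i qq i (dec b i) = pick_sum qmax qmin b.
  apply: eq_bigr => i _; rewrite ffunE /qmax /qmin maxEle minEle /jmax /jmin.
  by case: (b i); case: ifP.
under eq_bigr do rewrite ffunE.
by rewrite /tail_ind; case: ifP; rewrite ?mulr1 ?mulr0.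
Qed.

End TailAsBernoulliSum.

Section Sensitivity.
Variables (R : realType) (I : nat) (pstar Y1 Y0 : 'I_I -> 'I_2 -> R).
Variable q : ('I_I -> 'I_2 -> R) -> 'I_I -> 'I_2 -> R.
Hypotheses (pstar_ge0 : forall i j, 0 <= pstar i j)
  (pstar_sum : forall i, pstar i ord0 + pstar i ord_max = 1).
Local Notation assignment := {ffun 'I_I -> 'I_2}.

Definition pweight (s : assignment) : R := \prod_i pstar i (s i).

Lemma pweight_ge0 s : 0 <= pweight s.
Proof. exact: prodr_ge0. Qed.

Lemma sum_pweight : \sum_s pweight s = 1.
Proof.
rewrite -bigA_distr_bigA /= big1 // => i _.
by rewrite big_ord_recl big_ord1 -(pstar_sum i); congr (_ + pstar i _); apply: val_inj.
Qed.

Lemma Prob_mono (P Q : assignment -> Prop) :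
  (forall s, P s -> Q s) -> Prob pstar P <= Prob pstar Q.
Proof.
move=> PQ; apply: ler_sum_subpred => [s|s /asboolP Ps]; first exact: pweight_ge0.
by apply/asboolP; apply: PQ.
Qed.

Lemma Prob_tailp_gt (Tf : assignment -> R) (alpha : R) : 0 <= alpha ->
  1 - alpha <= Prob pstar (fun s => alpha < tailp pweight Tf s).
Proof.
move=> alpha_ge0; have := tailp_superuniform pweight_ge0 Tf alpha_ge0.
have -> : Prob pstar (fun s => alpha < tailp pweight Tf s) =
    \sum_(s | ~~ (tailp pweight Tf s <= alpha)) pweight s.
  by apply: eq_bigl => s; rewrite -ltNge; apply/asboolP/idP.
by have := sum_pweight; rewrite (bigID (fun s => tailp pweight Tf s <= alpha)) /=; lra.
Qed.

(* Raising the chance of the larger [q]-value to [theta G0] on the pairs with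
   [Gstar <= G0] and to [1] elsewhere, then moving the biased pairs onto [Ik],
   can only increase the upper tail of [t(U, Y)]. *)
Lemma tail_le_pbar s G0 k : (1 <= G0)%E -> (0 < k <= I)%N ->
  (k <= #|[set i | (Gstar pstar i <= G0)%E]|)%N ->
  \sum_(u | tstat q s (Yobs Y1 Y0 s) <= tstat q u (Yobs Y1 Y0 s)) pweight u
   <= pbar q Y1 Y0 s G0 k.
Proof.
move=> G1 /andP[k_gt0 kI] kA; rewrite /pbar gtn_eqF //.
set y := Yobs Y1 Y0 s; set qq := q y; set T := tstat q s y.
under eq_bigl do rewrite tstatE.
rewrite (tail_sum_Eprod pstar qq T).
set A := [set i | (Gstar pstar i <= G0)%E]; set K := [set i | i \in Ik qq k].
have /andP[th_ge0 th_le1] := theta_in01 G1.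
apply: le_trans (_ : Eprod (biasw (theta G0) A) (tail_ind T (qmax qq) (qmin qq)) <= _).
  apply: Eprod_le => [i x|i x|i|i|]; rewrite ?biasw_ge0 //.
  - by rewrite biasw_sum /jmax /jmin; case: ifP; rewrite // addrC.
  - rewrite /biasw inE; case: ifP => [/pstar_le_theta|_]; first exact.
    by have := pstar_sum i; have := pstar_ge0 i (jmin qq i); rewrite /jmax /jmin; case: ifP; lra.
  - exact/tail_ind_flip_monotone/qmin_le_qmax.
apply: le_trans (_ : Eprod (biasw (theta G0) K) (tail_ind T (qmax qq) (qmin qq)) <= _).
  apply: Eprod_biasw_least_spread => //; first exact: qmin_le_qmax.
    by rewrite card_Ik.
  by move=> i j; rewrite !inE !qmax_sub_qmin; apply: Ik_least_spread.
rewrite le_eqVlt; apply/orP; left; apply/eqP.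
apply: eq_bigr => b _; congr (_ * _).
by apply: eq_bigr => i _; rewrite /biasw inE.
Qed.

End Sensitivity.

Lemma card_Gstar_le_add_Istar (R : realType) I (pstar : 'I_I -> 'I_2 -> R) (G0 : \bar R) :
  (#|[set i | (Gstar pstar i <= G0)%E]| + Istar pstar G0)%N = I.
Proof.
rewrite -[RHS](card_ord I) -(cardsC [set i | (Gstar pstar i <= G0)%E]); congr (_ + _)%N.
by apply: eq_card => i; rewrite !inE ltNge.
Qed.

Lemma tailp_le_pbar (R : realType) I (pstar Y1 Y0 : 'I_I -> 'I_2 -> R)
    (q : ('I_I -> 'I_2 -> R) -> 'I_I -> 'I_2 -> R) :
  (forall i j, 0 <= pstar i j) -> (forall i, pstar i ord0 + pstar i ord_max = 1) ->
  (effect_increasing q \/ differential_increasing q) -> bounded_null Y1 Y0 ->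
  exists Tf, forall s G0 k, (1 <= G0)%E -> (0 < k <= I)%N ->
    (k <= #|[set i | (Gstar pstar i <= G0)%E]|)%N ->
    tailp (pweight pstar) Tf s <= pbar q Y1 Y0 s G0 k.
Proof.
move=> pstar_ge0 pstar_sum q_mono null; have [Tf Tf_dom] := exists_dominating_rank null q_mono.
exists Tf => s G0 k G1 kI kA; apply: le_trans _ (tail_le_pbar _ _ _ pstar_ge0 pstar_sum s G1 kI kA).
apply: ler_sum_subpred => [u|u]; [exact: pweight_ge0|exact: Tf_dom].
Qed.

Theorem theoremA3 (R : realType) (I : nat)
    (pstar Y1 Y0 : 'I_I -> 'I_2 -> R)
    (q : ('I_I -> 'I_2 -> R) -> 'I_I -> 'I_2 -> R) (alpha : R) :
  (forall i j, 0 <= pstar i j) ->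
  (forall i, pstar i ord0 + pstar i ord_max = 1) ->
  (effect_increasing q \/ differential_increasing q) ->
  bounded_null Y1 Y0 ->
  0 < alpha < 1 ->
  (* (i) *)
  (forall k : nat, (0 < k <= I)%N ->
     1 - alpha <= Prob pstar (fun s =>
        let g := kth_smallest (Gstar pstar) k in
        (1 <= g)%E /\ alpha < pbar q Y1 Y0 s g k))
  /\
  (* (ii) *)
  (forall G0 : \bar R, (1 <= G0)%E ->
     1 - alpha <= Prob pstar (fun s =>
        exists k : 'I_I.+1, (I - k)%N = Istar pstar G0 /\ alpha < pbar q Y1 Y0 s G0 k))
  /\
  (* (iii) *)
  (1 - alpha <= Prob pstar (fun s =>
      forall (G0 : \bar R) (k : nat), (1 <= G0)%E -> (0 < k <= I)%N ->
        pbar q Y1 Y0 s G0 k <= alpha -> ~ inS (Gstar pstar) G0 k)).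
Proof.
move=> pstar_ge0 pstar_sum q_mono null /andP[alpha_gt0 alpha_lt1].
have [Tf pbar_ge] := tailp_le_pbar pstar_ge0 pstar_sum q_mono null.
have valid := Prob_tailp_gt pstar_ge0 pstar_sum Tf (ltW alpha_gt0).
split; [|split]; [move=> k kI|move=> G0 G1|];
  apply: le_trans valid (Prob_mono pstar_ge0 _) => s tail_gt.
- have [i Gk] := kth_smallest_mem (Gstar pstar) kI.
  have G1 : (1 <= kth_smallest (Gstar pstar) k)%E by rewrite Gk Gstar_ge1.
  split=> //; apply: lt_le_trans tail_gt (pbar_ge _ _ _ G1 kI _).
  exact: kth_smallest_le_card kI _ (lexx _).
- set A := [set i | (Gstar pstar i <= G0)%E].
  have cardA := card_Gstar_le_add_Istar pstar G0; rewrite -/A in cardA.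
  have ltA : (#|A| < I.+1)%N by rewrite ltnS -[X in (_ <= X)%N]cardA leq_addr.
  exists (Ordinal ltA); split; first by rewrite /= -[X in (X - _)%N]cardA addKn.
  have [A0|A_gt0] := posnP #|A|; first by rewrite /pbar /= A0 eqxx.
  apply: lt_le_trans tail_gt (pbar_ge _ _ _ G1 _ (leqnn _)).
  by rewrite A_gt0 -[X in (_ <= X)%N]cardA leq_addr.
- move=> G0 k G1 kI pbar_le /(kth_smallest_le_card kI) kA.
  by have := pbar_ge s G0 k G1 kI kA; lra.
Qed.
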